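(* Let $h\in\mathbb R[x_1,\ldots,x_n]$ be homogeneous of degree $d$ with $h(e)\neq0$ for some $e\in\mathbb R^n$, and let $c_\alpha$, $H_\alpha$ and $\mathcal H_e(h)$ be as in the context. Assume there is a positive linear functional $\varphi\colon\mathbb C\langle z\rangle\to\mathbb C$ (i.e. $\varphi(p^*p)\ge0$ for all $p$) with $\varphi(H_\alpha)=c_\alpha$ for all $\alpha\in\mathbb N^n$ with $|\alpha|\le2(d-1)$. Then $\mathcal H_e(h)$ is a sum of hermitian squares of polynomial matrices, i.e. $\mathcal H_e(h)=\sum_i A_i^*A_i$ for finitely many matrices $A_i$ with entries in $\mathbb C[x_1,\ldots,x_n]$ (where $^*$ is conjugate transposition, coefficientwise conjugation, variables $x_j$ being fixed).
   Context: $h_{a,e}(t):=h(a-te)$. $\mathbb C\langle z\rangle=\mathbb C\langle z_1,\ldots,z_n\rangle$ is the free noncommutative unital algebra with involution determined by $z_i^*=z_i$. For a univariate polynomial $p$ of degree $d$ with complex roots $\lambda_1,\ldots,\lambda_d$, $N_k(p)=\sum_j\lambda_j^k$ is the $k$-th Newton sum. Write $N_k(h_{a,e}(t))=\sum_{|\alpha|=k}c_\alpha a^\alpha$ as a polynomial in $a\in\mathbb R^n$, defining $c_\alpha$. $H_\alpha\in\mathbb C\langle z\rangle$ is the sum of all words in $z_1,\dots,z_n$ containing each $z_i$ exactly $\alpha_i$ times. $\mathcal H_e(h)$ is the $d\times d$ Hermite matrix of $h(x-te)$ as a polynomial in $t$: $\mathcal H_e(h)=(N_{i+j}(h(x-te)))_{i,j=0,\ldots,d-1}$,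 whose entries are polynomials in $x$. *)

From HB Require Import structures.
From mathcomp Require Import all_boot all_order all_algebra.
From mathcomp Require Import reals.
From mathcomp.real_closed Require Import complex.
From mathcomp Require Import mpoly.

Set Implicit Arguments.
Unset Strict Implicit.
Unset Printing Implicit Defensive.

Import Order.TTheory GRing.Theory Num.Theory.
Local Open Scope ring_scope.

Notation Cx R := (complex R).

Definition cR (R : realType) (r : R) : Cx R := Complex r 0.

(* h_{a,e}(t) := h(a - t e), as a univariate polynomial in t over C.         *)
Definition h_ae (R : realType) (n : nat) (h : {mpoly R[n]})
  (a e : 'I_n -> R) : {poly Cx R} :=
  mmap (fun r : R => (cR r)%:P) (fun i => (cR (a i))%:P - cR (e i) *: 'X) h.

Definition is_root_list (C : idomainType) (p : {poly C}) (r : seq C) : Prop :=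
  p = lead_coef p *: \prod_(z <- r) ('X - z%:P).

Definition newton_sum_of (C : idomainType) (r : seq C) (k : nat) : C :=
  \sum_(z <- r) z ^+ k.

(* The free noncommutative *-algebra C<z_1..z_n> (z_i^* = z_i).
   An element is given as a finite list of terms (coefficient, word), a word
   being a sequence of letters in 'I_n; the element is the sum of the terms. *)
Definition ncpoly (n : nat) (C : Type) := seq (C * seq 'I_n).

Definition nc_star (R : realType) n (p : ncpoly n (Cx R)) : ncpoly n (Cx R) :=
  [seq ((t.1)^*%C, rev t.2) | t <- p].

Definition nc_mul (C : pzRingType) n (p q : ncpoly n C) : ncpoly n C :=
  [seq (s.1 * t.1, s.2 ++ t.2) | s <- p, t <- q].

(* A linear functional on C<z> is determined by its values L w on the basis of
   words; phi_L is its linear extension. *)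
Definition nc_apply (C : pzRingType) n (L : seq 'I_n -> C) (p : ncpoly n C) : C :=
  \sum_(t <- p) t.1 * L t.2.

Definition positive_functional (R : realType) n (L : seq 'I_n -> Cx R) : Prop :=
  forall p : ncpoly n (Cx R), 0 <= nc_apply L (nc_mul (nc_star p) p).

(* phi(H_alpha), H_alpha = sum of all words containing each z_i exactly
   alpha_i times (such words have length |alpha|). *)
Definition phi_H (C : pzRingType) n (L : seq 'I_n -> C) (alpha : 'X_{1..n}) : C :=
  \sum_(w : (mdeg alpha).-tuple 'I_n | [forall i, count_mem i w == alpha i])
     L (tval w).

Definition mx_adj (R : realType) n m k (A : 'M[{mpoly (Cx R)[n]}]_(m, k))
  : 'M[{mpoly (Cx R)[n]}]_(k, m) :=
  map_mx (map_mpoly (fun z : Cx R => z^*%C)) A^T.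

(* Since h is homogeneous of degree d, replacing a by lam a multiplies the roots
   of t |-> h(a - t e) by lam, so the Newton-sum polynomial P_k is homogeneous of
   degree k.  As phi(H_alpha) = c_alpha for |alpha| <= 2(d-1), the (i, j) entry of
   the Hermite matrix is therefore
     sum_{|alpha| = i+j} phi(H_alpha) x^alpha = sum_{|u| = i, |v| = j} phi(u^* v) x^u x^v,
   u, v ranging over words.  Positivity of phi makes the moment matrix
   (phi(u^* v)) over words of length < d positive semidefinite, hence of the form
   B^* B, and the Hermite matrix is (B V)^* (B V), where V sends a word of length j
   to its monomial placed in column j. *)

From HB Require Import structures.
From mathcomp Require Import all_boot all_order all_algebra.
From mathcomp Require Import reals.
From mathcomp.real_closed Require Import complex.
From mathcomp Require Import mpoly.
From mathcomp Require Import sesquilinear spectral.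
From mathcomp Require Import ring zify.
Import Order.TTheory GRing.Theory Num.Theory.
Local Open Scope ring_scope.
Local Open Scope sesquilinear_scope.
Set Implicit Arguments.
Unset Strict Implicit.
Unset Printing Implicit Defensive.

Lemma conjC_eq_of_real_form (C : numClosedFieldType) (a b b' c : C) :
  (forall z, a + z * b + z^* * b' + z^* * z * c \is Num.real) -> b^* = b'.
Proof.
move=> Freal.
have odd_real z : z * b + z^* * b' \is Num.real.
  have := rpredB (Freal z) (Freal (- z)); rewrite rmorphN /=.
  have -> : a + z * b + z^* * b' + z^* * z * c
             - (a + - z * b + - z^* * b' + - z^* * - z * c)
           = 2 * (z * b + z^* * b') by ring.
  by rewrite realMr ?pnatr_eq0 ?realn.
have /CrealP := odd_real 1; have /CrealP := odd_real 'i.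
rewrite !(rmorphD, rmorphM) /= !conjCK !conjCi !conjC1 !mul1r => Ei E1.
apply: (mulfI (x := 2)); first by rewrite pnatr_eq0.
apply/eqP; rewrite -subr_eq0; apply/eqP.
have -> : 2 * b^* - 2 * b' = (b^* + b'^* - (b + b'))
    + 'i * (- 'i * b^* + 'i * b'^* - ('i * b + - 'i * b'))
    + ('i * 'i + 1) * (b^* - b'^* + b - b') by ring.
by rewrite E1 Ei -expr2 sqrCi !subrr addNr mulr0 mul0r !addr0.
Qed.

Lemma psd_factor (C : numClosedFieldType) N (M : 'M[C]_N) :
  M ^t* = M ->
  (forall c : 'I_N -> C, 0 <= \sum_p \sum_q (c p)^* * c q * M p q) ->
  exists B : 'M[C]_N, M = B ^t* *m B.
Proof.
move=> Mherm Mpsd.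
have /orthomx_spectralP : M \is normalmx by apply/normalmxP; rewrite Mherm.
set P := spectralmx M; set D := spectral_diag M => ME.
have Punit : P \is unitarymx := spectral_unitarymx M.
have PV : invmx P = P ^t* by rewrite invmx_unitary.
(* D_k is the value of the form at the conjugate of the k-th row of P. *)
have D_ge0 k : 0 <= D 0 k.
  have <- : (P *m M *m P ^t*) k k = D 0 k.
    rewrite ME PV !mulmxA (unitarymxP Punit) mul1mx -mulmxA (unitarymxP Punit).
    by rewrite mulmx1 mxE eqxx mulr1n.
  rewrite mxE (eq_bigr (fun j => \sum_i P k i * M i j * (P ^t*) j k)); last first.
    by move=> j _; rewrite mxE big_distrl /=; apply: eq_bigr => i _; rewrite mxE.
  rewrite exchange_big /=; have := Mpsd (fun q => (P k q)^*); congr (0 <= _).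
  by apply: eq_bigr => p _; apply: eq_bigr => q _; rewrite !mxE conjCK mulrAC.
exists (diag_mx (map_mx sqrtC D) *m P).
rewrite trmx_mul map_mxM tr_diag_mx map_diag_mx mulmxA -[X in X *m P]mulmxA.
rewrite mulmx_diag ME PV; congr (_ *m diag_mx _ *m _).
apply/rowP => k; rewrite !mxE; move: (D 0 k) (D_ge0 k) => x x_ge0.
change (x = (sqrtC x)^* * sqrtC x).
by rewrite conj_Creal ?ger0_real ?sqrtC_ge0 // -expr2 sqrtCK.
Qed.

Section Moments.
Variables (R : realType) (n : nat) (L : seq 'I_n -> Cx R).
Hypothesis Lpos : positive_functional L.

Definition moment (u v : seq 'I_n) : Cx R := L (rev u ++ v).

Lemma moment_psd (I : finType) (w : I -> seq 'I_n) (c : I -> Cx R) :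
  0 <= \sum_s \sum_t (c s)^* * c t * moment (w s) (w t).
Proof.
have := Lpos [seq (c s, w s) | s <- enum I].
rewrite /nc_apply /nc_mul /nc_star big_allpairs_dep /= -map_comp big_map big_enum /=.
by under eq_bigr do rewrite big_map big_enum.
Qed.

Lemma conjC_moment (u v : seq 'I_n) : (moment u v)^* = moment v u.
Proof.
apply: (@conjC_eq_of_real_form _ (moment u u) _ _ (moment v v)) => z.
apply: ger0_real.
have := moment_psd (fun s : bool => if s then u else v) (fun s => if s then 1 else z).
by rewrite !big_bool /= conjC1 !mul1r !mulr1 !addrA.
Qed.

End Moments.

Lemma s2m_cat n (u v : seq 'I_n) : s2m (u ++ v) = (s2m u + s2m v)%MM.
Proof. by apply/mnmP => i; rewrite mnmDE !mnmE count_cat. Qed.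

Lemma s2m_rev n (u : seq 'I_n) : s2m (rev u) = s2m u.
Proof. by apply/mnmP => i; rewrite !mnmE count_rev. Qed.

Lemma mdeg_s2m n (u : seq 'I_n) : mdeg (s2m u) = size u.
Proof.
elim: u => [|x u IH]; first by rewrite mdegE big1 // => i _; rewrite mnmE.
rewrite -cat1s s2m_cat mdegD IH mdegE (bigD1 x) //= mnmE /= eqxx big1 // => i.
by rewrite mnmE /= eq_sym => /negbTE ->.
Qed.

Lemma big_tuple_cat (T : finType) i j (V : nmodType) (F : seq T -> V) :
  \sum_(w : (i + j).-tuple T) F w =
  \sum_(u : i.-tuple T) \sum_(v : j.-tuple T) F (u ++ v).
Proof.
rewrite pair_big /=.
rewrite (reindex (fun p : i.-tuple T * j.-tuple T => [tuple of p.1 ++ p.2])) //=.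
have take_size (w : (i + j).-tuple T) : size (take i w) == i.
  by rewrite size_takel // size_tuple leq_addr.
have drop_size (w : (i + j).-tuple T) : size (drop i w) == j.
  by rewrite size_drop size_tuple addKn.
exists (fun w => (Tuple (take_size w), Tuple (drop_size w))) => [[u v] _|w _].
  by congr (_, _); apply: val_inj; rewrite /= ?take_size_cat ?drop_size_cat ?size_tuple.
by apply: val_inj; rewrite /= cat_take_drop.
Qed.

Lemma big_tuple_rev (T : finType) k (V : nmodType) (F : seq T -> V) :
  \sum_(u : k.-tuple T) F (rev u) = \sum_(u : k.-tuple T) F u.
Proof.
rewrite (reindex_inj (h := fun u : k.-tuple T => [tuple of rev u])) /=.
  by apply: eq_bigr => u _; rewrite revK.
by move=> u v /(congr1 val) /(congr1 rev); rewrite !revK => /val_inj.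
Qed.

Lemma mx_adjE (R : realType) n a b (A : 'M[{mpoly (Cx R)[n]}]_(a, b)) :
  mx_adj A = map_mx (map_mpoly (@conjc R)) A^T.
Proof. by []. Qed.

Lemma mx_adj_mul (R : realType) n a b c (X : 'M[{mpoly (Cx R)[n]}]_(a, b))
  (Y : 'M[{mpoly (Cx R)[n]}]_(b, c)) : mx_adj (X *m Y) = mx_adj Y *m mx_adj X.
Proof. by rewrite !mx_adjE trmx_mul map_mxM. Qed.

Lemma mx_adj_mpolyC (R : realType) n a b (X : 'M[Cx R]_(a, b)) :
  mx_adj (map_mx (@mpolyC n (Cx R)) X) = map_mx (@mpolyC n (Cx R)) (X ^t*).
Proof. by apply/matrixP => i j; rewrite !mxE map_mpolyC. Qed.

Definition phiH_poly (R : realType) n (L : seq 'I_n -> Cx R) k : {mpoly (Cx R)[n]} :=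
  \sum_(w : k.-tuple 'I_n) L w *: 'X_[s2m w].

Lemma phiH_poly_split (R : realType) n (L : seq 'I_n -> Cx R) (i j : nat) :
  \sum_(u : i.-tuple 'I_n) \sum_(v : j.-tuple 'I_n)
     moment L u v *: 'X_[s2m u + s2m v] = phiH_poly L (i + j).
Proof.
rewrite /phiH_poly (big_tuple_cat _ _ (fun w => L w *: 'X_[s2m w])) /=.
rewrite -(big_tuple_rev _ (fun u => \sum_(v : j.-tuple 'I_n) L (u ++ v) *: 'X_[s2m (u ++ v)])).
by apply: eq_bigr => u _; apply: eq_bigr => v _; rewrite s2m_cat s2m_rev.
Qed.

Lemma big_sig_tag (I : finType) (J : I -> finType) (V : nmodType)
    (F : {i : I & J i} -> V) (i : I) :
  (forall p, tag p != i -> F p = 0) -> \sum_p F p = \sum_(u : J i) F (Tagged J u).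
Proof.
move=> F0; transitivity (\sum_k \sum_(u : J k) F (Tagged J u)).
  rewrite (sig_big_dep xpredT (fun _ _ => true) (fun k u => F (Tagged J u))) /=.
  by apply: eq_bigr => -[k u].
rewrite (bigD1 i) //= [X in _ + X]big1 ?addr0 // => k ki.
by apply: big1 => u _; apply: F0.
Qed.

Section MomentGram.
Variables (R : realType) (n d : nat) (L : seq 'I_n -> Cx R).
Hypothesis Lpos : positive_functional L.

Local Notation word := {k : 'I_d & k.-tuple 'I_n}.
Local Notation N := #|{: word}|.
Local Notation w_ s := (tagged (@enum_val word {: word} s) : seq 'I_n).

Definition moment_mx : 'M[Cx R]_N := \matrix_(s, t) moment L (w_ s) (w_ t).

Definition word_mx : 'M[{mpoly (Cx R)[n]}]_(N, d) :=
  \matrix_(s, j) if tag (@enum_val word {: word} s) == j then 'X_[s2m (w_ s)] else 0.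

Lemma moment_mx_factor : exists B : 'M[Cx R]_N, moment_mx = B ^t* *m B.
Proof.
apply: psd_factor => [|c].
  by apply/matrixP => s t; rewrite !mxE conjC_moment.
have := moment_psd Lpos (fun s : 'I_N => w_ s) c; congr (0 <= _).
by apply: eq_bigr => p _; apply: eq_bigr => q _; rewrite mxE.
Qed.

Lemma word_moment_mxE (i j : 'I_d) :
  (mx_adj word_mx *m map_mx (@mpolyC n _) moment_mx *m word_mx) i j =
  phiH_poly L (i + j).
Proof.
pose G (p q : word) : {mpoly (Cx R)[n]} :=
  (if tag p == i then 'X_[s2m (tagged p)] else 0) *
  (moment L (tagged p) (tagged q))%:MP *
  (if tag q == j then 'X_[s2m (tagged q)] else 0).
rewrite -phiH_poly_split mx_adjE mxE.
transitivity (\sum_(t < N) \sum_(s < N) G (enum_val s) (enum_val t)).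
  apply: eq_bigr => t _; rewrite mxE big_distrl /=; apply: eq_bigr => s _.
  rewrite !mxE /G; congr (_ * _ * _).
  by case: ifP => _; rewrite ?map_mpolyX ?rmorph0.
have big_word (F : word -> {mpoly (Cx R)[n]}) :
    \sum_(s < N) F (enum_val s) = \sum_(p : word) F p.
  by rewrite -big_enum_val; apply: eq_bigl => p; rewrite inE.
rewrite (big_word (fun q => \sum_(s < N) G (enum_val s) q)).
under eq_bigr do rewrite (big_word (G^~ _)).
rewrite exchange_big /= (@big_sig_tag _ _ _ _ i); last first.
  by move=> p /negbTE pi; apply: big1 => q _; rewrite /G pi !mul0r.
apply: eq_bigr => u _; rewrite (@big_sig_tag _ _ _ _ j); last first.
  by move=> q /negbTE qj; rewrite /G qj mulr0.
apply: eq_bigr => v _.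
by rewrite /G /= !eqxx mpolyXD -mul_mpolyC mulrCA mulrA.
Qed.

Lemma moment_sos : exists A : 'M[{mpoly (Cx R)[n]}]_(N, d),
  forall i j : 'I_d, (mx_adj A *m A) i j = phiH_poly L (i + j).
Proof.
have [B BE] := moment_mx_factor.
exists (map_mx (@mpolyC n _) B *m word_mx) => i j.
rewrite mx_adj_mul mx_adj_mpolyC mulmxA -[X in X *m word_mx]mulmxA -map_mxM -BE.
exact: word_moment_mxE.
Qed.

End MomentGram.

Lemma mcoeff_phiH_poly (R : realType) n (L : seq 'I_n -> Cx R) k (a : 'X_{1..n}) :
  (phiH_poly L k)@_a = if mdeg a == k then phi_H L a else 0.
Proof.
rewrite /phiH_poly raddf_sum /=; under eq_bigr do rewrite mcoeffZ mcoeffX.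
have [<-|ak] := eqVneq (mdeg a) k.
  rewrite /phi_H [RHS]big_mkcond /=; apply: eq_bigr => w _.
  have -> : [forall i, count_mem i w == a i] = (s2m w == a).
    apply/forallP/eqP => [wa|wa i]; first by apply/mnmP => i; rewrite mnmE; apply/eqP.
    by move/mnmP/(_ i): wa; rewrite mnmE => ->.
  by case: eqP; rewrite ?mulr1 ?mulr0.
apply: big1 => w _; case: eqP => [wa|]; last by rewrite mulr0.
by move: ak; rewrite -wa mdeg_s2m size_tuple eqxx.
Qed.

Lemma poly_eq0_of_vanish (R : numDomainType) (p : {poly R}) :
  (forall t, t != 0 -> p.[t] = 0) -> p = 0.
Proof.
move=> p_vanish; apply/eqP/negPn/negP => p_neq0.
pose rs : seq R := [seq i.+1%:R | i <- iota 0 (size p)].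
have rs_roots : all (root p) rs.
  by apply/allP => _ /mapP [i _ ->]; apply/eqP/p_vanish; rewrite pnatr_eq0.
have rs_uniq : uniq rs.
  by rewrite map_inj_uniq ?iota_uniq // => i j /eqP; rewrite eqr_nat => /eqP [].
by have := max_poly_roots p_neq0 rs_roots rs_uniq; rewrite size_map size_iota ltnn.
Qed.

Lemma base_expansion_inj (B : nat) n (f g : 'I_n -> nat) :
  (forall i, f i < B)%N -> (forall i, g i < B)%N ->
  (\sum_i f i * B ^ i = \sum_i g i * B ^ i)%N -> f =1 g.
Proof.
elim: n f g => [|n IH] f g fB gB; first by move=> _ [].
have shift (h : 'I_n.+1 -> nat) : (\sum_i h i * B ^ i =
    h ord0 + (\sum_(i < n) h (lift ord0 i) * B ^ i) * B)%N.
  rewrite big_ord_recl expn0 muln1 big_distrl /=; congr (_ + _)%N.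
  by apply: eq_bigr => i _; rewrite /bump /= add1n expnS mulnCA mulnC.
rewrite !shift => E.
have B_gt0 : (0 < B)%N by apply: leq_ltn_trans (fB ord0).
have E0 : f ord0 = g ord0.
  by have := congr1 (modn^~ B) E; rewrite /= ![(_ + _ * B)%N]addnC !modnMDl !modn_small.
have Elift : (\sum_(i < n) f (lift ord0 i) * B ^ i =
               \sum_(i < n) g (lift ord0 i) * B ^ i)%N.
  have := congr1 (divn^~ B) E.
  by rewrite /= ![(_ + _ * B)%N]addnC !divnMDl // !divn_small // !addn0.
move=> i; case: (unliftP ord0 i) => [j ->|-> //].
exact: IH (fun i => f (lift ord0 i)) (fun i => g (lift ord0 i))
  (fun i => fB _) (fun i => gB _) Elift j.
Qed.

Lemma mpoly_eq0_of_vanish (R : numDomainType) n (Q : {mpoly R[n]}) :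
  (forall v, Q.@[v] = 0) -> Q = 0.
Proof.
move=> Q_vanish; set B := msize Q.
(* Kronecker substitution x_i := t ^ B ^ i, injective on monomials of degree < B. *)
pose e (m : 'X_{1..n}) := (\sum_i m i * B ^ i)%N.
pose u : {poly R} := \sum_(m <- msupp Q) Q@_m *: 'X^(e m).
have u0 : u = 0.
  apply: poly_eq0_of_vanish => t _; rewrite -(Q_vanish (fun i => t ^+ (B ^ i))).
  rewrite mevalE horner_sum; apply: eq_bigr => m _.
  rewrite hornerZ hornerXn -prodrXr; congr (_ * _); apply: eq_bigr => i _.
  by rewrite -exprM mulnC.
have exps_lt m : m \in msupp Q -> forall i, (m i < B)%N.
  move=> mQ i; apply: leq_ltn_trans (msize_mdeg_lt mQ).
  by rewrite mdegE (bigD1 i) //= leq_addr.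
apply/mpolyP => a; rewrite mcoeff0.
have [aQ|/memN_msupp_eq0 //] := boolP (a \in msupp Q).
have := congr1 (coefp (e a)) u0.
rewrite /= coef0 /u coef_sum (bigD1_seq a) ?msupp_uniq //= big1_seq.
  by rewrite coefZ coefXn eqxx mulr1 addr0.
move=> m /andP [ma mQ]; rewrite coefZ coefXn.
have [/esym/(base_expansion_inj (exps_lt _ mQ) (exps_lt _ aQ))/mnmP ema|] :=
  eqVneq (e a) (e m); last by rewrite mulr0.
by rewrite ema eqxx in ma.
Qed.

Lemma mcoeff_pihomog (R : ringType) n k (Q : {mpoly R[n]}) (a : 'X_{1..n}) :
  (pihomog mdeg k Q)@_a = if mdeg a == k then Q@_a else 0.
Proof.
rewrite pihomogE {3}[Q]mpolyE !raddf_sum /= big_mkcond /=.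
have [ak|ak] := eqVneq (mdeg a) k; [apply: eq_bigr | apply: big1] => m _;
  rewrite mcoeffZ mcoeffX; have [<-|] := eqVneq a m; rewrite ?ak ?eqxx ?mulr0 ?if_same //.
by rewrite (negbTE ak).
Qed.

Lemma mcoeff_eq0_of_scaling (R : numDomainType) n (Q : {mpoly R[n]}) k :
  (forall a lam, lam != 0 -> Q.@[fun i => lam * a i] = lam ^+ k * Q.@[a]) ->
  forall al : 'X_{1..n}, mdeg al != k -> Q@_al = 0.
Proof.
move=> Q_scale al al_k; have := mcoeff_pihomog (mdeg al) Q al; rewrite eqxx => <-.
suff -> : pihomog mdeg (mdeg al) Q = 0 by rewrite mcoeff0.
apply: mpoly_eq0_of_vanish => a.
(* t |-> Q(t a) is a polynomial equal to Q(a) t^k, so its other coefficients vanish. *)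
pose u : {poly R} := \sum_(m <- msupp Q) (Q@_m * \prod_i a i ^+ m i) *: 'X^(mdeg m).
have u_homog : u = Q.@[a] *: 'X^k.
  apply/subr0_eq/poly_eq0_of_vanish => t t0.
  rewrite hornerD hornerN hornerZ hornerXn mulrC -Q_scale // mevalE horner_sum; apply/eqP; rewrite subr_eq0.
  apply/eqP/eq_bigr => m _; rewrite hornerZ hornerXn -mulrA; congr (_ * _).
  by rewrite mdegE -prodrXr -big_split /=; apply: eq_bigr => i _; rewrite exprMn mulrC.
have := congr1 (coefp (mdeg al)) u_homog.
rewrite /= coefZ coefXn (negbTE al_k) mulr0 /u coef_sum => <-.
rewrite pihomogE raddf_sum big_mkcond /=; apply: eq_bigr => m _.
rewrite coefZ coefXn eq_sym; case: eqP => _; last by rewrite mulr0.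
by rewrite mulr1 mevalZ mevalX.
Qed.

Lemma cRE (R : realType) (x : R) : cR x = real_complex R x.
Proof. by []. Qed.

Lemma is_root_list_prod (C : idomainType) (q : {poly C}) (c : C) (s : seq C) :
  q = c *: \prod_(z <- s) ('X - z%:P) -> is_root_list q s.
Proof.
move=> qE; rewrite /is_root_list {2}qE lead_coefZ.
by rewrite (monicP (monic_prod_XsubC _ _ _)) mulr1.
Qed.

Lemma newton_sum_of_scale (C : idomainType) (c : C) (r : seq C) k :
  newton_sum_of [seq c * z | z <- r] k = c ^+ k * newton_sum_of r k.
Proof.
by rewrite /newton_sum_of big_map mulr_sumr; apply: eq_bigr => z _; rewrite exprMn.
Qed.

Section NewtonSums.
Variables (R : realType) (n d : nat) (h : {mpoly R[n]}) (e : 'I_n -> R).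
Hypothesis h_homog : h \is d.-homog.

Lemma h_ae_scale (a : 'I_n -> R) (lam : R) : lam != 0 ->
  h_ae h (fun i => lam * a i) e =
  cR lam ^+ d *: (h_ae h a e \Po ((cR lam)^-1 *: 'X)).
Proof.
move=> lam0; set q := (cR lam)^-1 *: 'X.
have clam0 : cR lam != 0 by rewrite cRE fmorph_eq0.
rewrite /h_ae /mmap (raddf_sum (comp_poly q)) scaler_sumr /= !big_seq.
apply: eq_bigr => m mh; rewrite comp_polyM comp_polyC scalerAr; congr (_ * _).
rewrite /mmap1 (rmorph_prod (comp_poly q)) /=.
have factorE i : (cR (lam * a i))%:P - cR (e i) *: 'X =
    cR lam *: (((cR (a i))%:P - cR (e i) *: 'X) \Po q).
  rewrite comp_polyB comp_polyC comp_polyZ comp_polyX /q scalerBr !scalerA.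
  by rewrite [cR lam * _]mulrC -mulrA mulfV // mulr1 cRE rmorphM polyCM mul_polyC.
under eq_bigr do rewrite factorE exprZn.
rewrite scaler_prod prodrXr -mdegE (dhomog_mf h_homog mh); congr (_ *: _).
by apply: eq_bigr => i _; rewrite rmorphXn.
Qed.

Variable P : nat -> {mpoly R[n]}.
Hypothesis P_newton : forall (k : nat) (a : 'I_n -> R) (r : seq (Cx R)),
  is_root_list (h_ae h a e) r -> cR (P k).@[a] = newton_sum_of r k.

(* Scaling a by lam scales the roots of t |-> h(a - t e) by lam. *)
Lemma newton_scale k (a : 'I_n -> R) (lam : R) : lam != 0 ->
  (P k).@[fun i => lam * a i] = lam ^+ k * (P k).@[a].
Proof.
move=> lam0; have [r rE] := closed_field_poly_normal (h_ae h a e).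
set c := cR lam; have c0 : c != 0 by rewrite /c cRE fmorph_eq0.
have scaled_roots :
    is_root_list (h_ae h (fun i => lam * a i) e) [seq c * z | z <- r].
  apply: (@is_root_list_prod _ _ (c ^+ d * (lead_coef (h_ae h a e) * \prod_(z <- r) c^-1))).
  rewrite h_ae_scale // -/c {1}rE comp_polyZ scalerA [in RHS]mulrA -[RHS]scalerA.
  congr (_ *: _); rewrite (rmorph_prod (comp_poly (c^-1 *: 'X))) /= big_map.
  rewrite -scaler_prod; apply: eq_bigr => z _.
  by rewrite comp_polyB comp_polyC comp_polyX scalerBr scale_polyC mulrA mulVf // mul1r.
apply: (@complexI R).
change (cR (P k).@[fun i => lam * a i] = cR (lam ^+ k * (P k).@[a])).
rewrite (P_newton _ scaled_roots) newton_sum_of_scale -(P_newton _ rE).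
by rewrite [RHS]cRE rmorphM rmorphXn.
Qed.

Lemma newton_mcoeff_eq0 k (al : 'X_{1..n}) : mdeg al != k -> (P k)@_al = 0.
Proof. by apply: mcoeff_eq0_of_scaling => a lam; apply: newton_scale. Qed.

End NewtonSums.

Unset Implicit Arguments.
Set Strict Implicit.
Theorem proposition4p2 (R : realType) (n d : nat) (h : {mpoly R[n]})
  (e : 'I_n -> R)
  (P : nat -> {mpoly R[n]})
  (L : seq 'I_n -> Cx R) :
  h \is d.-homog ->
  h.@[e] != 0 ->
  (forall (k : nat) (a : 'I_n -> R) (r : seq (Cx R)),
      is_root_list (h_ae h a e) r ->
      cR (P k).@[a] = newton_sum_of r k) ->
  positive_functional L ->
  (forall alpha : 'X_{1..n}, (mdeg alpha <= 2 * (d - 1))%N ->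
      phi_H L alpha = cR (P (mdeg alpha))@_alpha) ->
  let Herm : 'M[{mpoly (Cx R)[n]}]_d :=
    \matrix_(i < d, j < d) map_mpoly (@cR R) (P (i + j)%N) in
  exists (k m : nat) (A : 'I_k -> 'M[{mpoly (Cx R)[n]}]_(m, d)),
    Herm = \sum_(i < k) mx_adj (A i) *m A i.
Proof.
move=> h_homog _ P_newton L_pos phiH_eq Herm.
have [A AE] := moment_sos d L_pos.
exists 1%N, _, (fun _ => A); rewrite big_ord1.
apply/matrixP => i j; rewrite AE mxE; apply/mpolyP => a.
rewrite mcoeff_phiH_poly (_ : map_mpoly (@cR R) = map_mpoly (real_complex R)) //.
rewrite mcoeff_map_mpoly; have [a_ij|a_ij] := eqVneq (mdeg a) (i + j)%N.
  by rewrite phiH_eq a_ij //; have := ltn_ord i; have := ltn_ord j; lia.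
by rewrite (newton_mcoeff_eq0 h_homog P_newton a_ij) raddf0.
Qed.
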